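(* Let $\epsilon>0$ and let $f:\mathbb N\to\mathbb R$ satisfy $f(q)\to\infty$. Then there exist an integer $\gamma>1$ and integers $L_n>1$ with $L_n\to\infty$ such that the rank-one subshift defined by $B_1=0$ and $B_{n+1}=\big((B_n1)^{\gamma}B_n\big)^{L_n}$, with $h_n$ the length of $B_n$, has complexity satisfying $$\limsup_{q\to\infty}\frac{p(q)}{q}<\frac32+\epsilon\quad\text{and}\quad p(h_n)<h_n+f(h_n)\ \text{for all } n\ge2.$$
   Context: For a sequence of finite words $B_n$ over $\{0,1\}$ in which each $B_n$ is a prefix and a subword of $B_{n+1}$, the associated subshift is the set of $x\in\{0,1\}^{\mathbb Z}$ all of whose finite subwords are subwords of some $B_n$; $p(q)$ is the number of distinct words of length $q$ occurring in elements of it. *)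

From HB Require Import structures.
From mathcomp Require Import all_boot all_order all_algebra.
From mathcomp Require Import all_classical all_reals all_analysis.
Set Implicit Arguments. Unset Strict Implicit. Unset Printing Implicit Defensive.

(* Words over {0,1}: seq bool, with false = 0 and true = 1. *)

Definition rank1_step (gamma L : nat) (B : seq bool) : seq bool :=
  flatten (nseq L (flatten (nseq gamma (B ++ [:: true])) ++ B)).

(* Bw gamma L n = B_n for n >= 1 (B_1 = 0, B_{n+1} = rank1_step gamma (L n) B_n);
   the index 0 is a dummy copy of B_1. *)
Fixpoint Bw (gamma : nat) (L : nat -> nat) (n : nat) : seq bool :=
  match n with
  | 0 => [:: false]
  | n'.+1 => if n' is 0 then [:: false] else rank1_step gamma (L n') (Bw gamma L n')
  end.

Definition subword (x : int -> bool) (i : int) (k : nat) : seq bool :=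
  mkseq (fun j => x (i + j%:Z)%R) k.

Definition subshift (B : nat -> seq bool) : set (int -> bool) :=
  [set x | forall (i : int) (k : nat), exists n, (1 <= n)%N /\ infix (subword x i k) (B n)].

Definition complexity (X : set (int -> bool)) (q : nat) : nat :=
  #|[set w : q.-tuple bool | `[< exists x i, X x /\ subword x i q = tval w >]]|.

From HB Require Import structures.
From mathcomp Require Import all_boot all_order all_algebra.
From mathcomp Require Import all_classical all_reals all_analysis.
From mathcomp Require Import zify ring lra.
Import Order.TTheory GRing.Theory Num.Theory.
Import numFieldNormedType.Exports.
Set Implicit Arguments. Unset Strict Implicit. Unset Printing Implicit Defensive.

(* Write [C = B_(n+1) = X^(L_n)] with period [X = (B_n 1)^gamma B_n].  Every later [B_N]
   is a concatenation of copies of [C] separated by optional spacers [1], so a word of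
   length [q] with [2 h_n <= q <= 2 h_(n+1) + 1] occurring in the subshift is a factor
   of [C s C s' C] with [s, s'] empty or [1].  Such a factor is a factor of the periodic
   word [(B_n 1)^oo] (at most [h_n + 1] of them), a factor of [X^oo] straddling the end
   of [X] (at most [|X|]), a factor around one spacer between two copies of [C] (about
   [2 (q - |X|)], and at most [q]), or a factor covering a whole [C] between two spacers
   ([q - h_(n+1) - 1]).  With [L_n >= 3 gamma + 3] this gives
   [p(q) <= (3/2 + 1/gamma) q], and [gamma > 1/eps] yields the limsup bound.  At
   [q = h_(n+1)] the count exceeds [h_(n+1)] by at most [h_n + |X| + 1], which
   [f(h_(n+1))] beats once [L_n] (hence [h_(n+1)]) is large enough. *)

Section Windows.
Variable T : Type.
Implicit Types (u v w : seq T).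

Definition wpow w k := flatten (nseq k w).
Definition window q i w := take q (drop i w).

Lemma wpowS w k : wpow w k.+1 = w ++ wpow w k. Proof. by []. Qed.

Lemma wpowD w a b : wpow w (a + b) = wpow w a ++ wpow w b.
Proof. by rewrite /wpow nseqD flatten_cat. Qed.

Lemma size_wpow w k : size (wpow w k) = k * size w.
Proof. by elim: k => [|k IH] //=; rewrite size_cat IH mulSn. Qed.

Lemma dropr_cat n u v : size u <= n -> drop n (u ++ v) = drop (n - size u) v.
Proof. by move=> le_u_n; rewrite drop_cat ltnNge le_u_n. Qed.

Lemma window_cons q i (x : T) w : window q i.+1 (x :: w) = window q i w.
Proof. by []. Qed.

Lemma window_catl q i u v : i + q <= size u -> window q i (u ++ v) = window q i u.
Proof.
move=> le_iq; rewrite /window drop_cat; case: ltnP => lt_i.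
  by rewrite takel_cat // size_drop; lia.
have -> : i = size u by lia.
have -> : q = 0 by lia.
by rewrite !take0.
Qed.

Lemma window_catr q i u v : size u <= i -> window q i (u ++ v) = window q (i - size u) v.
Proof. by move=> le_u_i; rewrite /window dropr_cat. Qed.

Lemma window_cat_mid q i u v : i <= size u -> size u <= i + q ->
  window q i (u ++ v) = drop i u ++ take (q - (size u - i)) v.
Proof.
move=> le_i le_u; rewrite /window drop_cat; case: ltnP => lt_i.
  by rewrite take_cat size_drop ltnNge (_ : size u - i <= q) //; lia.
have -> : i = size u by lia.
by rewrite subnn drop_size drop0 subn0.
Qed.

Lemma window_wpow_indep w r q M1 M2 : r + q <= M1 * size w -> r + q <= M2 * size w ->
  window q r (wpow w M1) = window q r (wpow w M2).
Proof.
wlog le_M12 : M1 M2 / M1 <= M2.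
  by move=> W h1 h2; case: (leqP M1 M2) => h; [|symmetry]; apply: W => //; lia.
move=> h1 _; rewrite (_ : M2 = M1 + (M2 - M1)); last by lia.
by rewrite wpowD window_catl // size_wpow.
Qed.

Lemma window_wpow_mod w i q M M' : 0 < size w -> i + q <= M * size w ->
  i %% size w + q <= M' * size w ->
  window q i (wpow w M) = window q (i %% size w) (wpow w M').
Proof.
move=> w_gt0 hM hM'; set s := size w in w_gt0 hM hM' *.
have Ei := divn_eq i s; set a := i %/ s in Ei.
have a_le : a <= M by rewrite -(leq_pmul2r w_gt0); lia.
rewrite (_ : M = a + (M - a)); last by lia.
rewrite wpowD window_catr size_wpow -/s; last by lia.
rewrite (_ : i - a * s = i %% s); last by lia.
by apply: window_wpow_indep => //; rewrite mulnBl; lia.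
Qed.

End Windows.

Definition spacer (b : bool) : seq bool := if b then [:: true] else [::].
Definition spaced (B : seq bool) := B ++ [:: true].
Definition step_period g (B : seq bool) := wpow (spaced B) g ++ B.

Lemma size_spacer b : size (spacer b) = b. Proof. by case: b. Qed.

Lemma size_spaced B : size (spaced B) = (size B).+1.
Proof. by rewrite size_cat addn1. Qed.

Lemma size_step_period g B : size (step_period g B) = g * (size B).+1 + size B.
Proof. by rewrite size_cat size_wpow size_spaced. Qed.

Lemma rank1_stepE g L B : rank1_step g L B = wpow (step_period g B) L.
Proof. by []. Qed.

Lemma size_rank1_step g L B : size (rank1_step g L B) = L * size (step_period g B).
Proof. exact: size_wpow. Qed.

Lemma step_period_spacer g B : step_period g B ++ [:: true] = wpow (spaced B) g.+1.
Proof. by rewrite /step_period -catA -addn1 wpowD /wpow /= cats0. Qed.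

Section OneStep.
Variables (g Lm : nat) (B : seq bool).
Local Notation Y := (spaced B).
Local Notation X := (step_period g B).
Local Notation C := (rank1_step g Lm B).

Definition periodic_factors q := [seq window q j (wpow Y q.+1) | j <- iota 0 (size Y)].

Definition junction_factors q := let P := size X in
  [seq window q r (wpow X q.+2) | r <- iota (P - minn q.-1 P) (minn q.-1 P)].

(* [d] letters before the spacer; when [q <= 2|X| + 2] the words with at most [|X|]
   letters on each side lie in [X 1 X], a factor of [(B 1)^(2g+2)], so they are
   already periodic and are left out. *)
Definition spacer_factors q := let P := size X in let H := size C in
  [seq window q (2 * H - d) ((C ++ C) ++ true :: C ++ C) | d <- if q <= 2 * P + 2
     then iota P.+1 (q - P.+1) ++ iota 0 (q - P.+1) else iota 0 q].

Definition bridge_factors q := let H := size C in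
  [seq window q i (C ++ true :: C ++ true :: C) | i <- iota (2 * H + 2 - q) (q - H.+1)].

Definition candidates q :=
  periodic_factors q ++ junction_factors q ++ spacer_factors q ++ bridge_factors q.

Lemma size_candidates q : size (candidates q) =
  (size B).+1 + minn q.-1 (size X) +
  (if q <= 2 * size X + 2 then 2 * (q - (size X).+1) else q) + (q - (size C).+1).
Proof.
rewrite /candidates /periodic_factors /junction_factors /spacer_factors /bridge_factors /=.
set P := size X; rewrite !size_cat !size_map !size_iota !addnA.
by case: ifP => _; rewrite ?size_cat ?size_iota /=; lia.
Qed.

Lemma periodic_factors_window q M i : i + q <= M * size Y ->
  window q i (wpow Y M) \in periodic_factors q.
Proof.
rewrite size_spaced => hM; rewrite (@window_wpow_mod _ _ _ _ _ q.+1) ?size_spaced //.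
  by apply: map_f; rewrite mem_iota size_spaced ltn_mod.
by have := ltn_mod i (size B).+1; nia.
Qed.

Hypothesis B_gt0 : 0 < size B.
Hypothesis Lm_gt0 : 0 < Lm.

Lemma wpow_period_window q K i : i + q <= K * size X ->
  window q i (wpow X K) \in candidates q.
Proof.
move=> hK; set P := size X.
have P_gt0 : 0 < P by rewrite /P size_step_period; lia.
rewrite (@window_wpow_mod _ _ _ _ _ q.+2) -/P //; last first.
  by have := ltn_mod i P; rewrite !mulSn; nia.
set r := i %% P; have lt_rP : r < P by rewrite ltn_mod.
rewrite !mem_cat; case: (leqP (r + q) P) => hr.
  rewrite wpowS window_catl // -(@window_catl _ _ _ _ [:: true]) //.
  rewrite step_period_spacer periodic_factors_window //.
  by move: hr; rewrite /P size_step_period size_spaced mulSn; lia.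
by apply/orP; right; apply/orP; left; apply: map_f; rewrite mem_iota; lia.
Qed.

Lemma rank1_step_window q i : i + q <= size C -> window q i C \in candidates q.
Proof. by rewrite size_rank1_step; exact: wpow_period_window. Qed.

Lemma rank1_step2_window q i : i + q <= 2 * size C ->
  window q i (C ++ C) \in candidates q.
Proof.
rewrite rank1_stepE -wpowD => hi; apply: wpow_period_window.
by move: hi; rewrite size_wpow mulnDl; lia.
Qed.

Lemma spacer_window_candidate q d m : d + m + 1 = q ->
  d <= 2 * size C -> m <= 2 * size C ->
  drop (2 * size C - d) (C ++ C) ++ true :: take m (C ++ C) \in candidates q.
Proof.
move=> hq hd hm; set P := size X; set H := size C in hd hm *.
have HP : H = Lm * P by rewrite /H size_rank1_step.
have P_gt0 : 0 < P by rewrite /P size_step_period; lia.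
have [far|close] := boolP ((P < d) || (P < m)).
  have -> : drop (2 * H - d) (C ++ C) ++ true :: take m (C ++ C) =
            window q (2 * H - d) ((C ++ C) ++ true :: C ++ C).
    rewrite window_cat_mid ?size_cat -/H; [|lia|lia].
    by rewrite (_ : q - (H + H - (2 * H - d)) = m.+1) //; lia.
  rewrite !mem_cat; apply/orP; right; apply/orP; right; apply/orP; left.
  apply: map_f; case: ifP => _; last by rewrite mem_iota; lia.
  by rewrite mem_cat !mem_iota; lia.
have C_endX : C = wpow X Lm.-1 ++ X.
  by rewrite rank1_stepE -{1}(prednK Lm_gt0) -addn1 wpowD /wpow /= cats0.
have C_startX : C = X ++ wpow X Lm.-1.
  by rewrite rank1_stepE -{1}(prednK Lm_gt0).
have size_front : size (wpow X Lm.-1) + P = H.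
  by rewrite size_wpow HP -{2}(prednK Lm_gt0) mulSn; lia.
have -> : drop (2 * H - d) (C ++ C) ++ true :: take m (C ++ C) =
          window q (P - d) (wpow Y (g.+1 + g.+1)).
  rewrite [Z in drop _ (_ ++ Z)]C_endX catA dropr_cat ?size_cat -/H; last by lia.
  rewrite (_ : 2 * H - d - (H + size (wpow X Lm.-1)) = P - d); last by lia.
  rewrite [Z in take _ (Z ++ _)]C_startX -catA takel_cat; last by lia.
  rewrite wpowD -step_period_spacer -catA window_cat_mid -/P; [|lia|lia].
  rewrite (_ : q - (P - (P - d)) = m.+1) /=; last by lia.
  by rewrite takel_cat // -/P; lia.
rewrite mem_cat periodic_factors_window //.
by move: close; rewrite /P size_step_period size_spaced; nia.
Qed.

Lemma spacer_window_candidate_drop q i m : i <= size C ->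
  size C - i + m + 1 = q -> m <= 2 * size C ->
  drop i C ++ true :: take m (C ++ C) \in candidates q.
Proof.
move=> hi hq hm; have := @spacer_window_candidate q (size C - i) m hq.
rewrite dropr_cat; last by lia.
by rewrite (_ : 2 * size C - (size C - i) - size C = i); [apply|]; lia.
Qed.

Lemma window_C1CC_candidate q i : q <= 2 * size C + 1 ->
  i + q <= size (C ++ true :: C ++ C) -> window q i (C ++ true :: C ++ C) \in candidates q.
Proof.
set H := size C => hq; rewrite size_cat /= size_cat -/H => hi.
have [inC|] := leqP (i + q) H; first by rewrite window_catl //; exact: rank1_step_window.
have [inCC _|acrossC lt_Hiq] := leqP H.+1 i.
  rewrite window_catr -/H; last by lia.
  rewrite (_ : i - H = (i - H.+1).+1) ?window_cons; last by lia.
  by apply: rank1_step2_window; lia.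
rewrite window_cat_mid -/H; [|lia|lia].
rewrite (_ : q - (H - i) = (q - (H - i)).-1.+1) /=; last by lia.
by apply: spacer_window_candidate_drop; rewrite -/H; lia.
Qed.

Lemma window_CC1C_candidate q i : q <= 2 * size C + 1 ->
  i + q <= size (C ++ C ++ true :: C) -> window q i (C ++ C ++ true :: C) \in candidates q.
Proof.
set H := size C => hq; rewrite catA !size_cat /= -/H => hi.
have [inCC|] := leqP (i + q) (H + H).
  by rewrite window_catl ?size_cat //; apply: rank1_step2_window; lia.
have [inC _|acrossC lt_Hiq] := leqP (H + H).+1 i.
  rewrite window_catr ?size_cat -/H; last by lia.
  rewrite (_ : i - (H + H) = (i - (H + H).+1).+1) ?window_cons; last by lia.
  by apply: rank1_step_window; lia.
rewrite window_cat_mid ?size_cat -/H; [|lia|lia].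
rewrite (_ : q - (H + H - i) = (q - (2 * H - i)).-1.+1) /=; last by lia.
rewrite -(@takel_cat _ _ C C); last by rewrite -/H; lia.
have := @spacer_window_candidate q (2 * H - i) (q - (2 * H - i)).-1.
by rewrite -/H (_ : 2 * H - (2 * H - i) = i); [apply|]; lia.
Qed.

Lemma window_C1C1C_candidate q i : q <= 2 * size C + 1 ->
  i + q <= size (C ++ true :: C ++ true :: C) ->
  window q i (C ++ true :: C ++ true :: C) \in candidates q.
Proof.
set H := size C => hq; rewrite size_cat /= size_cat /= -/H => hi.
have C1C_window j : j + q <= H + H.+1 -> window q j (C ++ true :: C) \in candidates q.
  move=> hj; rewrite -(@window_catl _ _ _ _ C) ?size_cat //= -catA.
  by apply: window_C1CC_candidate => //; rewrite !size_cat /= size_cat -/H; lia.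
have [inC1C|] := leqP (i + q) (H + H.+1).
  rewrite (_ : C ++ _ = (C ++ true :: C) ++ true :: C); last by rewrite -catA.
  by rewrite window_catl ?C1C_window // size_cat /= -/H; lia.
have [in1C1C _|bridge lt_iq] := leqP H.+1 i.
  rewrite (_ : C ++ _ = (C ++ [:: true]) ++ C ++ true :: C); last by rewrite -catA.
  by rewrite window_catr size_cat /= -/H ?C1C_window; lia.
rewrite !mem_cat; apply/orP; right; apply/orP; right; apply/orP; right.
by apply: map_f; rewrite mem_iota -/H; lia.
Qed.

Lemma three_blocks_window_candidate q b b' i : q <= 2 * size C + 1 ->
  i + q <= size (C ++ spacer b ++ C ++ spacer b' ++ C) ->
  window q i (C ++ spacer b ++ C ++ spacer b' ++ C) \in candidates q.
Proof.
case: b b' => [] [] /=; [exact: window_C1C1C_candidate|exact: window_C1CC_candidate|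
  exact: window_CC1C_candidate|].
move=> _ hi; rewrite rank1_stepE -!wpowD; apply: wpow_period_window.
set P := size X; by move: hi; rewrite !size_cat !size_rank1_step -/P; lia.
Qed.

End OneStep.

Definition spaced_concat (C t : seq bool) := C ++ flatten [seq spacer b ++ C | b <- t].

Lemma spaced_concat_cons C b t :
  spaced_concat C (b :: t) = C ++ spacer b ++ spaced_concat C t.
Proof. by rewrite /spaced_concat /= -!catA. Qed.

Lemma spaced_concat_cat C t b t' :
  spaced_concat C t ++ spacer b ++ spaced_concat C t' = spaced_concat C (t ++ b :: t').
Proof. by rewrite /spaced_concat map_cat flatten_cat /= -!catA. Qed.

Lemma spaced_concat_window C t q i : q <= 2 * size C + 1 ->
  i + q <= size (spaced_concat C t) ->
  exists b b' j, window q i (spaced_concat C t) = window q j (C ++ spacer b ++ C ++ spacer b' ++ C)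
    /\ j + q <= size (C ++ spacer b ++ C ++ spacer b' ++ C).
Proof.
move=> hq; elim: t i => [|b t IH] i hi.
  exists false, false, i; rewrite /spaced_concat /= cats0 in hi *.
  by rewrite window_catl // !size_cat; split => //; lia.
rewrite spaced_concat_cons in hi *.
rewrite [size (C ++ _)]size_cat [size (spacer b ++ _)]size_cat size_spacer in hi.
have [later|first] := leqP (size C + b) i.
  rewrite catA window_catr ?size_cat ?size_spacer //.
  by apply: IH; lia.
case: t {IH} hi => [|b' t] hi.
  exists b, false, i; rewrite /spaced_concat /= cats0 in hi *.
  rewrite (_ : C ++ spacer b ++ C ++ C = (C ++ spacer b ++ C) ++ C); last by rewrite -!catA.
  split; last by rewrite !size_cat size_spacer; lia.
  by rewrite [RHS]window_catl // !size_cat size_spacer; lia.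
exists b, b', i; rewrite spaced_concat_cons !catA window_catl -?catA //.
  by split => //; rewrite !size_cat !size_spacer; lia.
by rewrite !size_cat !size_spacer; lia.
Qed.

Lemma rank1_step_spaced_concat g L C t : 0 < L ->
  exists u, rank1_step g L (spaced_concat C t) = spaced_concat C u.
Proof.
move=> L_gt0; have [u Eu] : exists u, step_period g (spaced_concat C t) = spaced_concat C u.
  rewrite /step_period; elim: g => [|k [u IH]]; first by exists t.
  by exists (t ++ true :: u); rewrite -spaced_concat_cat -IH wpowS -!catA.
rewrite rank1_stepE Eu; case: L L_gt0 => [//|L] _.
elim: L => [|L [u' IH]]; first by exists u; rewrite /wpow /= cats0.
by exists (u ++ false :: u'); rewrite -spaced_concat_cat -IH wpowS.
Qed.

Lemma Bw_succ g L m : 0 < m -> Bw g L m.+1 = rank1_step g (L m) (Bw g L m).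
Proof. by case: m. Qed.

Section Subshift.
Variables (g : nat) (L : nat -> nat).
Hypothesis L_gt0 : forall k, 0 < L k.

Lemma Bw_spaced_concat n N : 0 < n -> n <= N ->
  exists t, Bw g L N = spaced_concat (Bw g L n) t.
Proof.
move=> n_gt0; elim: N => [|N IH] le_nN; first by lia.
have [lt_nN|ge_nN] := ltnP n N.+1; last first.
  by rewrite (_ : N.+1 = n); [exists [::]; rewrite /spaced_concat cats0|lia].
rewrite Bw_succ; last by lia.
by have [t ->] := IH lt_nN; exact: rank1_step_spaced_concat.
Qed.

Lemma size_Bw_gt0 n : 0 < size (Bw g L n).
Proof.
case: n => [|[|n]] //; have [t ->] := @Bw_spaced_concat 1 n.+2 erefl erefl.
by rewrite size_cat.
Qed.

Lemma infix_Bw_candidate m n (w : seq bool) : 0 < m -> 0 < n ->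
  size w <= 2 * size (Bw g L m.+1) + 1 -> infix w (Bw g L n) ->
  w \in candidates g (L m) (Bw g L m) (size w).
Proof.
move=> m_gt0 n_gt0 hq w_infix; set N := maxn n m.+1.
have w_infixN : infix w (Bw g L N).
  have [t ->] := @Bw_spaced_concat n N n_gt0 (leq_maxl _ _).
  exact: infix_trans w_infix (prefixW (prefix_prefix _ _)).
have [t EN] := @Bw_spaced_concat m.+1 N erefl (leq_maxr _ _).
move: w_infixN; rewrite EN => /infixP [s [s' Es]].
have Ew : w = window (size w) (size s) (spaced_concat (Bw g L m.+1) t).
  by rewrite Es /window drop_size_cat // take_size_cat.
have [|b [b' [j [Ej hj]]]] := spaced_concat_window (t := t) (i := size s) hq.
  by rewrite Es !size_cat addnA leq_addr.
rewrite {1}Ew Ej; rewrite Bw_succ // in hq hj *.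
by apply: three_blocks_window_candidate => //; exact: size_Bw_gt0.
Qed.

Lemma card_tuple_set_le q (P : q.-tuple bool -> Prop) (S : seq (seq bool)) :
  (forall w, P w -> tval w \in S) -> #|[set w : q.-tuple bool | `[< P w >]]| <= size S.
Proof.
move=> PS; rewrite cardE -(size_map val).
apply: uniq_leq_size; first by rewrite map_inj_uniq ?enum_uniq //; exact: val_inj.
by move=> s /mapP [w]; rewrite mem_enum inE => /asboolP Pw ->; exact: PS.
Qed.

Lemma complexity_le_size_candidates m q : 0 < m ->
  q <= 2 * size (Bw g L m.+1) + 1 ->
  complexity (subshift (Bw g L)) q <= size (candidates g (L m) (Bw g L m) q).
Proof.
move=> m_gt0 hq; apply: card_tuple_set_le => w [x [i [Xx <-]]].
have [n [n_gt0 w_infix]] := Xx i q.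
have size_w : size (subword x i q) = q by rewrite size_mkseq.
by have := @infix_Bw_candidate m n (subword x i q) m_gt0 n_gt0; rewrite size_w; apply.
Qed.

End Subshift.
Lemma size_candidates_le K Lm B q : 0 < K -> 0 < size B -> 3 * K + 3 <= Lm ->
  2 * size B <= q -> q <= 2 * size (rank1_step K Lm B) + 1 ->
  2 * K * size (candidates K Lm B q) <= (3 * K + 2) * q.
Proof.
move=> K_gt0 B_gt0 hL hq1; rewrite size_candidates size_rank1_step size_step_period.
set h := size B in B_gt0 hq1 *; set P := K * h.+1 + h.
have [hP1 hP2] : K * h <= P /\ h + 1 <= P by split; rewrite /P; nia.
have hH : (3 * K + 3) * P <= Lm * P by rewrite leq_mul2r hL orbT.
set H := Lm * P in hH * => hq2.
clearbody h P H; clear hL.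
case: ifP => hq3.
  case: (leqP q P.+1) => hq4.
    have -> : minn q.-1 P = q.-1 by lia.
    have -> : q - P.+1 = 0 by lia.
    have -> : q - H.+1 = 0 by nia.
    nia.
  have -> : minn q.-1 P = P by lia.
  have -> : q - H.+1 = 0 by nia.
  nia.
have -> : minn q.-1 P = P by lia.
case: (leqP q H.+1) => hq4.
  have -> : q - H.+1 = 0 by lia.
  nia.
nia.
Qed.

Lemma size_candidates_height g Lm B :
  size (candidates g Lm B (size (rank1_step g Lm B))) <=
  size (rank1_step g Lm B) + (size B + size (step_period g B) + 1).
Proof. by rewrite size_candidates; case: ifP => hc; lia. Qed.

Section Heights.
Variables (K : nat) (th : nat -> nat).

Definition period_len h := K * h.+1 + h.

(* [L_n >= 3K + 3] drives the bound on [p(q)/q], [L_n >= n] forces [L_n -> oo], and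
   [h_(n+1) >= L_n >= th (h_n + |X_n| + 1)] makes [f(h_(n+1))] exceed the excess
   [h_n + |X_n| + 1] of [p(h_(n+1))] over [h_(n+1)]. *)
Definition next_L n h := maxn (3 * K + n + 3) (th (h + period_len h + 1)).

Fixpoint height n := match n with
  | 0 => 1
  | n'.+1 => if n' is 0 then 1 else next_L n' (height n') * period_len (height n')
  end.

Definition Lseq n := next_L n (height n).

Lemma heightS n : 0 < n -> height n.+1 = Lseq n * period_len (height n).
Proof. by case: n. Qed.

Lemma size_Bw_height n : size (Bw K Lseq n) = height n.
Proof.
elim: n => [|[|n] IH] //.
by rewrite Bw_succ // size_rank1_step size_step_period IH (heightS (n := n.+1)).
Qed.

Lemma Lseq_ge n : 3 * K + n + 3 <= Lseq n.
Proof. exact: leq_maxl. Qed.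

Lemma Lseq_gt0 n : 0 < Lseq n.
Proof. by apply: leq_trans (Lseq_ge n); lia. Qed.

Lemma height_gt0 n : 0 < height n.
Proof.
elim: n => [|[|n] IH] //; rewrite heightS // muln_gt0 Lseq_gt0 /period_len.
by rewrite addn_gt0 IH orbT.
Qed.

Lemma height_ltS n : 0 < n -> height n < height n.+1.
Proof.
move=> n_gt0; rewrite heightS // /period_len.
have := height_gt0 n; have := Lseq_ge n.
set h := height n; set L := Lseq n => hL h_gt0.
have : 2 * h <= L * (K * h.+1 + h) by apply: leq_mul; [lia|exact: leq_addl].
lia.
Qed.

Lemma height_bracket q : 2 <= q ->
  exists m, [/\ 0 < m, 2 * height m <= q & q <= 2 * height m.+1 + 1].
Proof.
move=> q_ge2; have height_ge n : n <= height n.+1.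
  by elim: n => [|n IH] //; apply: leq_ltn_trans IH (height_ltS _).
suff bracket N : q < 2 * height N.+1 ->
    exists m, [/\ 0 < m, 2 * height m <= q & q <= 2 * height m.+1 + 1].
  by apply: (bracket q.+1); have := height_ge q.+1; lia.
elim: N => [|N IH] lt_q; first by move: lt_q => /=; lia.
have [|ge_q] := ltnP q (2 * height N.+1); first exact: IH.
by exists N.+1; split => //; lia.
Qed.

Lemma complexity_ratio_bound q : 0 < K -> 2 <= q ->
  2 * K * complexity (subshift (Bw K Lseq)) q <= (3 * K + 2) * q.
Proof.
move=> K_gt0 q_ge2; have [m [m_gt0 hq1 hq2]] := height_bracket q_ge2.
rewrite -!size_Bw_height Bw_succ // in hq1 hq2.
apply: leq_trans (leq_mul (leqnn _) (complexity_le_size_candidates Lseq_gt0 m_gt0 _)) _.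
  by rewrite Bw_succ.
apply: size_candidates_le => //; first by rewrite size_Bw_height height_gt0.
by apply: leq_trans (Lseq_ge m); lia.
Qed.

Lemma complexity_height_bound m : 0 < m ->
  complexity (subshift (Bw K Lseq)) (height m.+1) <=
  height m.+1 + (height m + period_len (height m) + 1).
Proof.
move=> m_gt0; rewrite -!size_Bw_height.
apply: leq_trans (complexity_le_size_candidates Lseq_gt0 m_gt0 _) _; first by lia.
rewrite Bw_succ //; apply: leq_trans (size_candidates_height _ _ _) _.
by rewrite size_step_period size_Bw_height.
Qed.

End Heights.

Local Open Scope classical_set_scope.
Local Open Scope ring_scope.

Lemma cvgry_threshold (R : realType) (f : nat -> R) : f @ \oo --> +oo ->
  exists th : nat -> nat, forall M m, (th M <= m)%N -> M%:R < f m.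
Proof.
move=> f_oo; have threshold M : exists N, forall m, (N <= m)%N -> M%:R < f m.
  have /cvgryPgt /(_ M%:R) [N _ HN] := f_oo.
  by exists N => m hm; apply: HN.
by have [th Hth] := choice threshold; exists th.
Qed.

Lemma limn_esup_le_eventually (R : realType) (u : R^nat) (c : R) N :
  (forall n, (N <= n)%N -> u n <= c) -> (limn_esup (fun n => (u n)%:E) <= c%:E)%E.
Proof.
move=> uc; rewrite limn_esup_lim; apply: lime_le; first exact: is_cvg_esups.
exists N => // n /= le_Nn; apply: ge_ereal_sup => _ [k /= le_nk <-].
by rewrite lee_fin; apply: uc; lia.
Qed.

Lemma ratio_le_of_natmul (R : realFieldType) (K p q : nat) : (0 < K)%N -> (0 < q)%N ->
  (2 * K * p <= (3 * K + 2) * q)%N -> p%:R / q%:R <= 3 / 2 + K%:R^-1 :> R.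
Proof.
move=> K_gt0 q_gt0; rewrite -(ler_nat R) !natrM natrD natrM => hpq.
have [K_pos q_pos] : (0 : R) < K%:R /\ (0 : R) < q%:R by rewrite !ltr0n.
rewrite ler_pdivrMr // -subr_ge0.
have -> : (3 / 2 + K%:R^-1) * q%:R - p%:R =
    (K%:R^-1 / 2) * ((3 * K%:R + 2) * q%:R - 2 * K%:R * p%:R) :> R.
  by field; rewrite pnatr_eq0 -lt0n.
by rewrite mulr_ge0 ?subr_ge0 // divr_ge0 // invr_ge0 ler0n.
Qed.

Lemma invr_truncn_lt (R : archiRealFieldType) (eps : R) : 0 < eps ->
  ((Num.truncn eps^-1).+2%:R)^-1 < eps.
Proof.
move=> eps_gt0; set K := (Num.truncn eps^-1).+2.
have K_gt0 : (0 : R) < K%:R by rewrite ltr0n.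
rewrite -(@ltr_pM2r _ K%:R) // mulVf ?lt0r_neq0 //.
rewrite -[X in X < _](mulfV (lt0r_neq0 eps_gt0)) ltr_pM2l //.
by apply: lt_le_trans (Num.Theory.truncnS_gt _) _; rewrite ler_nat.
Qed.

Lemma Lseq_cvgy (R : realType) K th : (fun n => (Lseq K th n)%:R : R) @ \oo --> +oo.
Proof.
apply/cvgryPge => A; have /cvgryPge /(_ A) := @cvgr_idn R.
by apply: filterS => n /le_trans; apply; rewrite ler_nat; apply: leq_trans (Lseq_ge _ _ _); lia.
Qed.

Lemma complexity_height_lt (R : realType) (f : nat -> R) K th :
  (forall M m, (th M <= m)%N -> M%:R < f m) -> forall n, (2 <= n)%N ->
  (complexity (subshift (Bw K (Lseq K th))) (height K th n))%:R <
    (height K th n)%:R + f (height K th n).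
Proof.
move=> fth [//|m] m_gt0.
set h := height K th m.
apply: (@le_lt_trans _ _ (height K th m.+1 + (h + period_len K h + 1))%N%:R).
  by rewrite ler_nat; exact: complexity_height_bound.
rewrite natrD ltrD2l; apply: fth; rewrite heightS //.
have h_gt0 := height_gt0 K th m.
apply: leq_trans (leq_maxr _ _) _; rewrite -/(next_L K th m h).
by apply: leq_pmulr; rewrite /period_len; lia.
Qed.

Theorem theorem4 (R : realType) (eps : R) (f : nat -> R) :
  0 < eps -> f @ \oo --> +oo ->
  exists (gamma : nat) (L : nat -> nat),
    (1 < gamma)%N /\
    (forall n : nat, (1 <= n)%N -> (1 < L n)%N) /\
    (fun n => (L n)%:R : R) @ \oo --> +oo /\
    let p := complexity (subshift (Bw gamma L)) in
    let h := fun n => size (Bw gamma L n) in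
    (limn_esup (fun q : nat => ((p q)%:R / q%:R : R)%:E) < (3 / 2 + eps)%:E)%E /\
    (forall n : nat, (2 <= n)%N -> (p (h n))%:R < (h n)%:R + f (h n)).
Proof.
move=> eps_gt0 /cvgry_threshold [th fth]; set K := (Num.truncn eps^-1).+2.
exists K, (Lseq K th); split => //; split.
  by move=> n _; apply: leq_trans (Lseq_ge K th n); lia.
split; first exact: Lseq_cvgy.
move=> p h; split.
  apply: (@le_lt_trans _ _ (3 / 2 + K%:R^-1)%:E).
    apply: (limn_esup_le_eventually (N := 2)) => q q_ge2.
    by apply: ratio_le_of_natmul; [|lia|exact: complexity_ratio_bound].
  by rewrite lte_fin ltrD2l invr_truncn_lt.
by move=> n n_ge2; rewrite /h size_Bw_height; exact: complexity_height_lt.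
Qed.
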